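(* There is an absolute constant $C>0$ such that every Boolean matrix $F\in\{0,1\}^{\mathcal X\times\mathcal Y}$ (with $\mathcal X,\mathcal Y$ finite nonempty) satisfies $\log_2\!\big(1/\mathrm{wrect}(F)\big)\le C\cdot \mathsf{N}(F)$; that is, $\mathsf{N}(F)\gtrsim \log(1/\mathrm{wrect}(F))$.
   Context: A combinatorial rectangle is a set $S\times T$ with $S\subseteq\mathcal X$, $T\subseteq\mathcal Y$; it is monochromatic in $F$ if $F$ is constant on it. The weighted rectangle ratio is $\mathrm{wrect}(F)=\inf_{\mu}\max_R \mu(R)$, where the infimum is over all product probability measures $\mu=\mu_{\mathcal X}\times\mu_{\mathcal Y}$ on $\mathcal X\times\mathcal Y$ and the maximum is over monochromatic rectangles $R$ of $F$. A deterministic protocol is a binary tree in which each internal node is owned by Alice (labelled by a function $\mathcal X\to\{0,1\}$) or Bob (labelled by a function $\mathcal Y\to\{0,1\}$); on input $(x,y)$ the players follow the path determined by these bits, and the leaf reached gives the output in $\{0,1\}$; its cost is the tree height. A nondeterministic protocol consists of a family of deterministic protocols $\pi_a$ indexed by advice strings $a$ of some length $k$; it computes $F$ if for all $(x,y)$: $F(x,y)=1$ iff there exists $a$ with $\pi_a(x,y)=1$. Its cost is $k$ plus the maximum cost of $\pi_a$ over all $a$. $\mathsf{N}(F)$ is the minimum cost of a nondeterministic protocol computing $F$. Logarithms are base 2. *)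

From HB Require Import structures.
From mathcomp Require Import all_boot all_order all_algebra.
From mathcomp Require Import all_classical all_reals.
From mathcomp Require Import exp.

Set Implicit Arguments.
Unset Strict Implicit.
Unset Printing Implicit Defensive.

Import Order.TTheory GRing.Theory Num.Theory.

Section Rect.
Context {R : realType} {X Y : finType}.
Local Open Scope ring_scope.

Definition monochromatic (F : X -> Y -> bool) (S : {set X}) (T : {set Y}) : bool :=
  [exists b : bool, [forall x in S, [forall y in T, F x y == b]]].

Definition is_prob {Z : finType} (m : Z -> R) : Prop :=
  (forall z, 0 <= m z) /\ \sum_(z : Z) m z = 1.

Definition prod_meas (muX : X -> R) (muY : Y -> R) (S : {set X}) (T : {set Y}) : R :=
  (\sum_(x in S) muX x) * (\sum_(y in T) muY y).

(* max over monochromatic rectangles R of mu(R) (the empty rectangle is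
   monochromatic with measure 0, so 0 is a correct neutral element) *)
Definition max_mono_rect (F : X -> Y -> bool) (muX : X -> R) (muY : Y -> R) : R :=
  \big[Num.max/0]_(S : {set X})
    \big[Num.max/0]_(T : {set Y} | monochromatic F S T) prod_meas muX muY S T.

Definition wrect (F : X -> Y -> bool) : R :=
  inf [set r : R | exists (muX : X -> R) (muY : Y -> R),
         is_prob muX /\ is_prob muY /\ r = max_mono_rect F muX muY].

End Rect.

Definition log2 {R : realType} (v : R) : R := (ln v / ln 2)%R.

Inductive protocol (X Y : Type) : Type :=
| PLeaf : bool -> protocol X Y
| PAlice : (X -> bool) -> protocol X Y -> protocol X Y -> protocol X Y
| PBob : (Y -> bool) -> protocol X Y -> protocol X Y -> protocol X Y.

Arguments PLeaf {X Y}.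

Fixpoint prun {X Y : Type} (p : protocol X Y) (x : X) (y : Y) : bool :=
  match p with
  | PLeaf b => b
  | PAlice f p0 p1 => if f x then prun p1 x y else prun p0 x y
  | PBob g p0 p1 => if g y then prun p1 x y else prun p0 x y
  end.

Fixpoint pheight {X Y : Type} (p : protocol X Y) : nat :=
  match p with
  | PLeaf _ => 0
  | PAlice _ p0 p1 => (maxn (pheight p0) (pheight p1)).+1
  | PBob _ p0 p1 => (maxn (pheight p0) (pheight p1)).+1
  end.

(* A nondeterministic protocol with advice length k: a family of
   deterministic protocols indexed by advice strings a in {0,1}^k. *)
Definition nd_computes {X Y : Type} (F : X -> Y -> bool) (k : nat)
  (pi : k.-tuple bool -> protocol X Y) : Prop :=
  forall x y, F x y = true <-> exists a : k.-tuple bool, prun (pi a) x y = true.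
Arguments nd_computes {X Y} F k pi.

Definition nd_cost {X Y : Type} (k : nat) (pi : k.-tuple bool -> protocol X Y) : nat :=
  k + \max_(a : k.-tuple bool) pheight (pi a).
Arguments nd_cost {X Y} k pi.

Definition has_nd_protocol_of_cost {X Y : Type} (F : X -> Y -> bool) (n : nat) : bool :=
  `[< exists (k : nat) (pi : k.-tuple bool -> protocol X Y),
        nd_computes F k pi /\ nd_cost k pi = n >].

Fixpoint triv_B {X Y : eqType} (F : X -> Y -> bool) (x0 : X) (s : seq Y)
  : protocol X Y :=
  match s with
  | [::] => PLeaf false
  | y0 :: s' => PBob (fun y => y == y0) (triv_B F x0 s') (PLeaf (F x0 y0))
  end.

Fixpoint triv_A {X Y : eqType} (F : X -> Y -> bool) (s : seq X) (t : seq Y)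
  : protocol X Y :=
  match s with
  | [::] => PLeaf false
  | x0 :: s' => PAlice (fun x => x == x0) (triv_A F s' t) (triv_B F x0 t)
  end.

Lemma triv_B_ok {X Y : eqType} (F : X -> Y -> bool) x0 (s : seq Y) x y :
  y \in s -> prun (triv_B F x0 s) x y = F x0 y.
Proof.
elim: s => [//|y0 s IH] /=; rewrite in_cons.
by case: eqP => [-> //|_] /= /IH.
Qed.

Lemma triv_A_ok {X Y : eqType} (F : X -> Y -> bool) (s : seq X) (t : seq Y) x y :
  x \in s -> y \in t -> prun (triv_A F s t) x y = F x y.
Proof.
elim: s => [//|x0 s IH] /=; rewrite in_cons => + yt.
case: eqP => [-> _|_ /= xs]; first exact: triv_B_ok.
exact: IH.
Qed.

Lemma nd_protocol_exists {X Y : finType} (F : X -> Y -> bool) :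
  exists n, has_nd_protocol_of_cost F n.
Proof.
exists (nd_cost 0 (fun _ : 0.-tuple bool => triv_A F (enum X) (enum Y))).
apply/asboolP; exists 0, (fun _ => triv_A F (enum X) (enum Y)); split => // x y.
rewrite triv_A_ok ?mem_enum //; split => [->|[]//].
by exists [tuple].
Qed.

Definition Ncc {X Y : finType} (F : X -> Y -> bool) : nat :=
  ex_minn (nd_protocol_exists F).

(** A nondeterministic protocol of cost n covers the 1-entries of F by at most
    2^n rectangles, one per advice string and accepting transcript.  Given a
    product probability measure and t such rectangles, either one of them has
    both sides of mass at least 1/(2t), or every rectangle has a side of mass
    below 1/(2t); in the second case, deleting the small sides from X and Y
    leaves a 0-monochromatic rectangle with both sides of mass at least 1/2.
    Hence wrect(F) >= 1/(4 t^2) >= 2^-(2n+2), which is at least 2^-(4n) when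
    n >= 1; when n = 0, F is constant and wrect(F) = 1. *)

From HB Require Import structures.
From mathcomp Require Import all_boot all_order all_algebra.
From mathcomp Require Import all_classical all_reals.
From mathcomp Require Import exp.
From mathcomp Require Import ring zify.
Import Order.TTheory GRing.Theory Num.Theory.
Local Open Scope ring_scope.

Section ProbabilitySums.
Context {R : realType} {Z : finType}.

Lemma is_prob_uniform : (0 < #|Z|)%N -> is_prob (fun _ : Z => #|Z|%:R^-1 : R).
Proof.
move=> Z_gt0; split=> [z|]; first by rewrite invr_ge0.
rewrite sumr_const -[#|_|]/#|Z| -[LHS]mulr_natr mulVf //.
by rewrite pnatr_eq0 -lt0n.
Qed.

Lemma sum_setT (m : Z -> R) : \sum_(z in [set: Z]) m z = \sum_z m z.
Proof. by apply: eq_bigl => z; rewrite inE. Qed.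

Lemma sum_setC (m : Z -> R) (A : {set Z}) :
  is_prob m -> \sum_(z in ~: A) m z = 1 - \sum_(z in A) m z.
Proof.
case=> _ m1; rewrite -m1 [in RHS](bigID (mem A)) /= addrC addrK.
by apply: eq_bigl => z; rewrite inE.
Qed.

Lemma sum_bigcup_le {I : finType} (m : Z -> R) (A : I -> {set Z}) (P : pred I) :
  (forall z, 0 <= m z) ->
  \sum_(z in \bigcup_(i | P i) A i) m z <= \sum_(i | P i) \sum_(z in A i) m z.
Proof.
move=> m_ge0; under [leRHS]eq_bigr do rewrite big_mkcond.
rewrite exchange_big big_mkcond /=; apply: ler_sum => z _.
have sum_ge0 (Q : pred I) : 0 <= \sum_(i | Q i) (if z \in A i then m z else 0).
  by apply: sumr_ge0 => i _; case: ifP.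
case: bigcupP => [[i Pi zAi]|_] //.
by rewrite (bigD1 i) //= zAi lerDl.
Qed.

Lemma sum_compl_bigcup_ge {I : finType} (m : Z -> R) (A : I -> {set Z})
    (P : pred I) (e : R) :
  is_prob m -> 0 <= e -> (forall i, P i -> \sum_(z in A i) m z <= e) ->
  1 - e *+ #|I| <= \sum_(z in ~: \bigcup_(i | P i) A i) m z.
Proof.
move=> pm e_ge0 small; rewrite sum_setC // lerD2l lerN2.
apply: le_trans (sum_bigcup_le m A P pm.1) _.
apply: le_trans (_ : \sum_(i | P i) e <= _); first exact: ler_sum.
by rewrite -sumr_const [leRHS](bigID P) /= lerDl sumr_ge0.
Qed.

End ProbabilitySums.

Lemma prod_meas_le_max_mono_rect {R : realType} {X Y : finType}
    {F : X -> Y -> bool} {muX : X -> R} {muY : Y -> R} {S T} :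
  monochromatic F S T -> prod_meas muX muY S T <= max_mono_rect F muX muY.
Proof.
by move=> mono; apply: le_trans (le_bigmax _ _ S); apply: le_bigmax_cond.
Qed.

Section RectangleCover.
Context {R : realType} {X Y : finType} {I : finType}.
Context {F : X -> Y -> bool} {A : I -> {set X}} {B : I -> {set Y}}.
Hypothesis F_cover : forall x y, F x y = [exists i, (x \in A i) && (y \in B i)].

Lemma monochromatic_cover_rect i : monochromatic F (A i) (B i).
Proof.
apply/existsP; exists true; apply/forall_inP => x xA; apply/forall_inP => y yB.
by rewrite F_cover eqb_id; apply/existsP; exists i; rewrite xA yB.
Qed.

Lemma monochromatic_compl_cover (P : pred I) :
  monochromatic F (~: \bigcup_(i | P i) A i) (~: \bigcup_(i | ~~ P i) B i).
Proof.
apply/existsP; exists false; apply/forall_inP => x xS; apply/forall_inP => y yT.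
rewrite F_cover; apply/eqP/negbTE/existsPn => i; apply/andP => -[xA yB].
move: xS yT; rewrite !inE => /bigcupP xS /bigcupP yT.
by case: (boolP (P i)) => Pi; [apply: xS | apply: yT]; exists i.
Qed.

Lemma max_mono_rect_ge_cover {muX : X -> R} {muY : Y -> R} :
  is_prob muX -> is_prob muY -> (0 < #|I|)%N ->
  (2 * #|I|)%:R ^- 2 <= max_mono_rect F muX muY.
Proof.
move=> pX pY I_gt0; set e : R := (2 * #|I|)%:R^-1.
have e_ge0 : 0 <= e by rewrite invr_ge0.
have e_le_half : e <= 2^-1.
  by rewrite lef_pV2 ?posrE ?ltr0n ?muln_gt0 // ler_nat leq_pmulr.
have half_mass : 1 - e *+ #|I| = 2^-1.
  by rewrite /e natrM -mulr_natr; field; rewrite pnatr_eq0 -lt0n.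
rewrite -exprVn expr2 -/e.
have [/existsP [i /andP [bigA bigB]]|/existsPn small] :=
  boolP [exists i, (e <= \sum_(x in A i) muX x) && (e <= \sum_(y in B i) muY y)].
  apply: le_trans (prod_meas_le_max_mono_rect (monochromatic_cover_rect i)).
  exact: ler_pM.
pose P i := \sum_(x in A i) muX x < e.
apply: le_trans (prod_meas_le_max_mono_rect (monochromatic_compl_cover P)).
apply: ler_pM => //; apply: (le_trans e_le_half); rewrite -half_mass.
  by apply: sum_compl_bigcup_ge => // i /ltW.
apply: sum_compl_bigcup_ge => // i; move: (small i).
by rewrite negb_and -!ltNge /P => /orP [->|/ltW].
Qed.

End RectangleCover.

Section ProtocolRectangles.
Context {X Y : finType}.

(* The rectangle of inputs whose run follows the branch bits [w] to an
   accepting leaf; bits left over after the leaf are ignored, and a [w] too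
   short to reach a leaf gives the empty rectangle. *)
Fixpoint path_rows (p : protocol X Y) (w : seq bool) : {set X} :=
  match p, w with
  | PLeaf b, _ => if b then [set: X] else finset.set0
  | PAlice f p0 p1, c :: w' =>
      [set x | f x == c] :&: path_rows (if c then p1 else p0) w'
  | PBob _ p0 p1, c :: w' => path_rows (if c then p1 else p0) w'
  | _, [::] => finset.set0
  end.

Fixpoint path_cols (p : protocol X Y) (w : seq bool) : {set Y} :=
  match p, w with
  | PLeaf _, _ => [set: Y]
  | PAlice _ p0 p1, c :: w' => path_cols (if c then p1 else p0) w'
  | PBob g p0 p1, c :: w' =>
      [set y | g y == c] :&: path_cols (if c then p1 else p0) w'
  | _, [::] => finset.set0
  end.

Lemma prun_path_rect p w x y :
  x \in path_rows p w -> y \in path_cols p w -> prun p x y.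
Proof.
elim: p w => [b|f p0 IH0 p1 IH1|g p0 IH0 p1 IH1] [|c w] //=;
  rewrite ?inE //; try by case: b; rewrite ?inE.
- by case/andP => /eqP ->; case: c; [apply: IH1 | apply: IH0].
- by move=> xR /andP [/eqP ->]; case: c xR; [apply: IH1 | apply: IH0].
Qed.

Lemma prun_exists_path_rect {p x y h} : (pheight p <= h)%N -> prun p x y ->
  exists w : h.-tuple bool, (x \in path_rows p w) && (y \in path_cols p w).
Proof.
elim: p h => [b|f p0 IH0 p1 IH1|g p0 IH0 p1 IH1] [|h] //=.
- by move=> _ ->; exists [tuple]; rewrite !inE.
- by move=> _ ->; exists (nseq_tuple h.+1 false); rewrite !inE.
- rewrite ltnS geq_max => /andP [h0 h1]; case fx: (f x) => run.
    have [w rw] := IH1 h h1 run.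
    by exists [tuple of true :: w]; rewrite /= !inE fx.
  have [w rw] := IH0 h h0 run.
  by exists [tuple of false :: w]; rewrite /= !inE fx.
- rewrite ltnS geq_max => /andP [h0 h1]; case gy: (g y) => run.
    have [w rw] := IH1 h h1 run.
    by exists [tuple of true :: w]; rewrite /= !inE gy andbCA.
  have [w rw] := IH0 h h0 run.
  by exists [tuple of false :: w]; rewrite /= !inE gy andbCA.
Qed.

Lemma nd_computes_cover {F : X -> Y -> bool} {k : nat}
    { pi : k.-tuple bool -> protocol X Y } {h : nat} :
  nd_computes F k pi -> (forall a, pheight (pi a) <= h)%N ->
  forall x y, F x y = [exists i : k.-tuple bool * h.-tuple bool,
    (x \in path_rows (pi i.1) i.2) && (y \in path_cols (pi i.1) i.2)].
Proof.
move=> pi_F pi_h x y; apply/idP/existsP => [/pi_F [a run_a]|[[a w] /andP [xR yC]]].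
  by have [w rw] := prun_exists_path_rect (pi_h a) run_a; exists (a, w).
by apply/pi_F; exists a; apply: prun_path_rect xR yC.
Qed.

Lemma nd_cost0_const {F : X -> Y -> bool} {k : nat}
    { pi : k.-tuple bool -> protocol X Y } :
  nd_computes F k pi -> nd_cost k pi = 0%N -> exists b, forall x y, F x y = b.
Proof.
move=> pi_F /eqP; rewrite /nd_cost addn_eq0 => /andP [/eqP k0 h0]; subst k.
have : (pheight (pi [tuple]) <= 0)%N.
  by rewrite -[leqRHS](eqP h0) (leq_bigmax [tuple]).
case pi0: (pi [tuple]) => [b|//|//] _; exists b => x y.
apply/idP/idP => [/pi_F [a]|Fb]; first by rewrite tuple0 pi0.
by apply/pi_F; exists [tuple]; rewrite pi0.
Qed.

End ProtocolRectangles.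

Section WrectBounds.
Context {R : realType} {X Y : finType}.
Variable F : X -> Y -> bool.
Hypotheses (X_gt0 : (0 < #|X|)%N) (Y_gt0 : (0 < #|Y|)%N).

Lemma lb_le_wrect {w : R} :
  (forall muX muY, is_prob muX -> is_prob muY -> w <= max_mono_rect F muX muY) ->
  w <= wrect F.
Proof.
move=> lb; apply: lb_le_inf; last by move=> r [muX [muY [pX [pY ->]]]]; apply: lb.
exists (max_mono_rect F (fun=> #|X|%:R^-1) (fun=> #|Y|%:R^-1)).
by do 2 eexists; split; [|split; [|reflexivity]]; apply: is_prob_uniform.
Qed.

Lemma wrect_const_ge1 b : (forall x y, F x y = b) -> 1 <= wrect F :> R.
Proof.
move=> Fb; apply: lb_le_wrect => muX muY [_ sX] [_ sY].
have mono : monochromatic F [set: X] [set: Y].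
  apply/existsP; exists b.
  by apply/forall_inP => x _; apply/forall_inP => y _; rewrite Fb.
apply: le_trans (prod_meas_le_max_mono_rect mono).
by rewrite /prod_meas !sum_setT sX sY mulr1.
Qed.

Lemma wrect_ge_exp2_Ncc : (2 ^ (4 * Ncc F))%:R^-1 <= wrect F :> R.
Proof.
rewrite /Ncc; case: ex_minnP => n /asboolP [k [pi [pi_F <-]]] _.
have [cost0|cost_gt0] := posnP (nd_cost k pi).
  have [b Fb] := nd_cost0_const pi_F cost0.
  by rewrite cost0 invr1; apply: wrect_const_ge1 Fb.
set h := \max_(a : k.-tuple bool) pheight (pi a).
have cover :=
  nd_computes_cover pi_F (fun a => leq_bigmax a : pheight (pi a) <= h)%N.
have card_I : #|{: k.-tuple bool * h.-tuple bool}| = (2 ^ nd_cost k pi)%N.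
  by rewrite card_prod !card_tuple card_bool -expnD.
have I_gt0 : (0 < #|{: k.-tuple bool * h.-tuple bool}|)%N.
  by rewrite card_I expn_gt0.
apply: le_trans (lb_le_wrect (fun muX muY pX pY =>
  max_mono_rect_ge_cover cover pX pY I_gt0)).
rewrite card_I lef_pV2 ?posrE ?exprn_gt0 ?ltr0n ?muln_gt0 ?expn_gt0 //.
by rewrite -natrX ler_nat -expnS -expnM leq_pexp2l //; lia.
Qed.

End WrectBounds.

Lemma log2_le_nat {R : realType} (v : R) (m : nat) :
  0 < v -> v <= (2 ^ m)%:R -> log2 v <= m%:R.
Proof.
move=> v_gt0 v_le; have ln2_gt0 : 0 < ln (2 : R) by rewrite ln_gt0 ?ltr1n.
rewrite /log2 ler_pdivrMr // mulr_natl -lnXn ?ltr0n // -natrX.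
by rewrite ler_ln ?posrE ?ltr0n ?expn_gt0.
Qed.

Theorem proposition4p1 (R : realType) :
  exists C : R, 0 < C /\
    forall (X Y : finType) (F : X -> Y -> bool),
      (0 < #|X|)%N -> (0 < #|Y|)%N ->
      log2 ((wrect F : R)^-1) <= C * (Ncc F)%:R.
Proof.
exists 4; split=> // X Y F X_gt0 Y_gt0.
have wF := wrect_ge_exp2_Ncc (R := R) F X_gt0 Y_gt0.
have pow_gt0 : 0 < (2 ^ (4 * Ncc F))%:R :> R by rewrite ltr0n expn_gt0.
have w_gt0 : 0 < wrect F :> R by apply: lt_le_trans wF; rewrite invr_gt0.
rewrite -natrM; apply: log2_le_nat; first by rewrite invr_gt0.
by rewrite invf_ple ?posrE.
Qed.
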